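(* Let $\mathscr{A}\in\mathbb{R}^{n_1\times n_2\times n_3}$, $\mathscr{B}\in\mathbb{R}^{n_1\times s\times n_3}$, and suppose $k$ steps of the tensor tubal-global Golub–Kahan algorithm described in the context have been run (without breakdown). Then $$\mathscr{A}\star\mathbb{V}_k=\mathbb{U}_{k+1}\star(\widetilde{\mathscr{C}}_k\circledast\mathscr{I}_{ssn_3})=\mathbb{U}_k\star(\mathscr{C}_k\circledast\mathscr{I}_{ssn_3})+\mathscr{U}_{k+1}\star((\mathbf{a}_{k+1}\star\mathscr{E}_k)\circledast\mathscr{I}_{ssn_3}),$$ $$\mathscr{A}^T\star\mathbb{U}_k=\mathbb{V}_k\star(\mathscr{C}_k^T\circledast\mathscr{I}_{ssn_3}),\qquad \mathscr{B}=\mathbb{U}_{k+1}\star((\mathscr{E}_1^{(k+1)}\star\mathbf{a}_1)\circledast\mathscr{I}_{ssn_3}).$$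
   Context: All tensors are real third-order arrays. $\widehat{\mathscr{A}}=\mathscr{A}\times_3F_{n_3}$ denotes the tensor obtained by applying the discrete Fourier transform ($F_{n_3}$ with entries $\omega^{(i-1)(j-1)}$, $\omega=e^{-2\pi\mathrm{i}/n_3}$) to each tube; its frontal slices $\hat A^{(k)}$ are the Fourier slices. T-product: $\mathscr{A}\star\mathscr{B}$ has Fourier slices $\hat A^{(k)}\hat B^{(k)}$. Transpose $\mathscr{A}^T$: transpose each frontal slice and reverse the order of frontal slices $2,\dots,n_3$. $\mathscr{I}_{ssn_3}$: first frontal slice $I_s$, others zero. T-Kronecker product $\mathscr{A}\circledast\mathscr{B}$: Fourier slices $\hat A^{(k)}\otimes\hat B^{(k)}$. A tube is an element of $\mathbb{R}^{1\times1\times n_3}$; $\mathbf{e}$ has entries $(1,0,\dots,0)$, $\mathbf{o}$ is the zero tube. For a tube $\mathbf{a}$, $\mathbf{a}\divideontimes\mathscr{W}$ has $(i,j)$ tube $\mathbf{a}\star\mathscr{W}(i,j,:)$. Normalization of $\mathscr{W}$: $\mathbf{a}$ is the tube with $k$-th Fourier coefficient $\|\hat W^{(k)}\|_F$ (breakdown if one is zero) and $\mathscr{Q}$ has Fourier slices $\hat W^{(k)}/\|\hat W^{(k)}\|_F$; output $[\mathscr{Q},\mathbf{a}]$. Tubal-global Golub–Kahan algorithm: $\mathscr{V}_0=0\in\mathbb{R}^{n_2\times s\times n_3}$, $[\mathscr{U}_1,\mathbf{a}_1]=\mathrm{Normalization}(\mathscr{B})$; for $j=1,\dots,k$: $\widetilde{\mathscr{V}}=\mathscr{A}^T\star\mathscr{U}_j-\mathbf{a}_j\divideontimes\mathscr{V}_{j-1}$,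 $[\mathscr{V}_j,\mathbf{b}_j]=\mathrm{Normalization}(\widetilde{\mathscr{V}})$, $\widetilde{\mathscr{U}}=\mathscr{A}\star\mathscr{V}_j-\mathbf{b}_j\divideontimes\mathscr{U}_j$, $[\mathscr{U}_{j+1},\mathbf{a}_{j+1}]=\mathrm{Normalization}(\widetilde{\mathscr{U}})$. Notation: $\mathbb{V}_k=[\mathscr{V}_1,\dots,\mathscr{V}_k]\in\mathbb{R}^{n_2\times ks\times n_3}$, $\mathbb{U}_k=[\mathscr{U}_1,\dots,\mathscr{U}_k]$, $\mathbb{U}_{k+1}=[\mathbb{U}_k,\mathscr{U}_{k+1}]$ (concatenation along mode 2). $\widetilde{\mathscr{C}}_k\in\mathbb{R}^{(k+1)\times k\times n_3}$ is the bidiagonal tensor whose $(j,j)$ tube is $\mathbf{b}_j$, whose $(j+1,j)$ tube is $\mathbf{a}_{j+1}$ ($j=1,\dots,k$), and all other tubes are $\mathbf{o}$; $\mathscr{C}_k\in\mathbb{R}^{k\times k\times n_3}$ is obtained by deleting its last horizontal slice. $\mathscr{E}_k=[\mathbf{o},\dots,\mathbf{o},\mathbf{e}]\in\mathbb{R}^{1\times k\times n_3}$ and $\mathscr{E}_1^{(k+1)}=[\mathbf{e};\mathbf{o};\dots;\mathbf{o}]\in\mathbb{R}^{(k+1)\times1\times n_3}$. *)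

From mathcomp Require Import all_boot all_algebra.
From mathcomp Require Import reals trigo.
From mathcomp.real_closed Require Import complex mxtens.

Set Implicit Arguments.
Unset Strict Implicit.
Unset Printing Implicit Defensive.

Import GRing.Theory Num.Theory.
Local Open Scope ring_scope.

Section Tensors.
Variable R : realType.
Local Notation C := R[i].

(* real third-order tensors of size n1 x n2 x n3 : A i j l = A(i,j,l) (0-based) *)
Definition tensor (n1 n2 n3 : nat) := 'I_n1 -> 'I_n2 -> 'I_n3 -> R.
Definition tube (n3 : nat) := tensor 1 1 n3.

Definition tzero n1 n2 n3 : tensor n1 n2 n3 := fun _ _ _ => 0.
Definition tadd n1 n2 n3 (X Y : tensor n1 n2 n3) : tensor n1 n2 n3 :=
  fun i j l => X i j l + Y i j l.
Definition tsub n1 n2 n3 (X Y : tensor n1 n2 n3) : tensor n1 n2 n3 :=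
  fun i j l => X i j l - Y i j l.

(* omega = exp(-2 pi i / n) *)
Definition omega (n : nat) : C :=
  Complex (cos (2 * pi / n%:R)) (- sin (2 * pi / n%:R)).

Definition cplx (x : R) : C := Complex x 0.

Definition tfft n1 n2 n3 (X : tensor n1 n2 n3) (k : 'I_n3) : 'M[C]_(n1, n2) :=
  \matrix_(i, j) \sum_(l < n3) omega n3 ^+ (k * l) * cplx (X i j l).

(* inverse DFT along the tubes; the result is real whenever the family of
   Fourier slices is the DFT of a real tensor; we keep its real part. *)
Definition tifft n1 n2 n3 (F : 'I_n3 -> 'M[C]_(n1, n2)) : tensor n1 n2 n3 :=
  fun i j l => complex.Re ((n3%:R)^-1 * \sum_(k < n3) (omega n3 ^+ (k * l))^-1 * F k i j).

Definition tprod n1 n2 n3 n4 (X : tensor n1 n2 n4) (Y : tensor n2 n3 n4)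
  : tensor n1 n3 n4 := tifft (fun k => tfft X k *m tfft Y k).

(* reversal of frontal slices 2..n3 : 0 |-> 0, l |-> n3 - l *)
Definition tidx n (l : 'I_n) : 'I_n := insubd l (n - l)%N.

Definition ttr n1 n2 n3 (X : tensor n1 n2 n3) : tensor n2 n1 n3 :=
  fun i j l => X j i (tidx l).

Definition tid (s n3 : nat) : tensor s s n3 :=
  fun i j l => ((i == j) && (l == 0 :> nat))%:R.

Definition etube (n3 : nat) : tube n3 := fun _ _ l => (l == 0 :> nat)%:R.

Definition tkron m1 m2 p1 p2 n3 (X : tensor m1 m2 n3) (Y : tensor p1 p2 n3)
  : tensor (m1 * p1) (m2 * p2) n3 :=
  tifft (fun k => tensmx (tfft X k) (tfft Y k)).

Definition tdivt m n n3 (a : tube n3) (W : tensor m n n3) : tensor m n n3 :=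
  fun i j l => tprod a (fun (_ : 'I_1) (_ : 'I_1) => W i j) ord0 ord0 l.

Definition frob m n (M : 'M[C]_(m, n)) : C :=
  sqrtC (\sum_(i < m) \sum_(j < n) `|M i j| ^+ 2).

Definition normalization m n n3 (W : tensor m n n3) : tensor m n n3 * tube n3 :=
  (tifft (fun k => (frob (tfft W k))^-1 *: tfft W k),
   tifft (fun k => (frob (tfft W k))%:M)).

Definition nobreak m n n3 (W : tensor m n n3) : Prop :=
  forall k : 'I_n3, frob (tfft W k) != 0.

(* concatenation along mode 2: [F_0, ..., F_(p-1)], block j, column c <-> j*s+c *)
Definition bcat m s n3 p (F : 'I_p -> tensor m s n3) : tensor m (p * s) n3 :=
  fun i q l => F (mxtens_unindex q).1 i (mxtens_unindex q).2 l.

Definition castc m n n' n3 (e : n = n') (X : tensor m n n3) : tensor m n' n3 :=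
  fun i j l => X i (cast_ord (esym e) j) l.
Definition castr m m' n n3 (e : m = m') (X : tensor m n n3) : tensor m' n n3 :=
  fun i j l => X (cast_ord (esym e) i) j l.

(* bidiagonal tensor tilde C_k ((k+1) x k): (j,j) tube b_j, (j+1,j) tube a_(j+1)
   (1-based); sequences a b are indexed by their 1-based indices. *)
Definition Ctil n3 (k : nat) (a b : nat -> tube n3) : tensor k.+1 k n3 :=
  fun i j l => if i == j :> nat then b j.+1 ord0 ord0 l
               else if i == j.+1 :> nat then a j.+2 ord0 ord0 l else 0.

Definition Cmat n3 (k : nat) (a b : nat -> tube n3) : tensor k k n3 :=
  fun i j l => @Ctil n3 k a b (widen_ord (leqnSn k) i) j l.

Definition Ek (k n3 : nat) : tensor 1 k n3 :=
  fun _ j l => if j == k.-1 :> nat then @etube n3 ord0 ord0 l else 0.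

Definition E1 (k n3 : nat) : tensor k.+1 1 n3 :=
  fun i _ l => if i == 0 :> nat then @etube n3 ord0 ord0 l else 0.

(* k steps of the tubal-global Golub-Kahan algorithm, without breakdown.
   U j = U_j, V j = V_j, a j = a_j, b j = b_j (1-based; V 0 = V_0). *)
Definition GK_run n1 n2 n3 s (A : tensor n1 n2 n3) (B : tensor n1 s n3) (k : nat)
  (U : nat -> tensor n1 s n3) (V : nat -> tensor n2 s n3) (a b : nat -> tube n3)
  : Prop :=
  [/\ V 0%N = @tzero n2 s n3,
      nobreak B,
      (U 1%N, a 1%N) = normalization B &
      forall j : nat, (1 <= j <= k)%N ->
        let Vt := tsub (tprod (ttr A) (U j)) (tdivt (a j) (V j.-1)) in
        nobreak Vt /\ (V j, b j) = normalization Vt /\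
        let Ut := tsub (tprod A (V j)) (tdivt (b j) (U j)) in
        nobreak Ut /\ (U j.+1, a j.+1) = normalization Ut].

End Tensors.

(* Taking the DFT along the tubes turns the t-product into slice-wise matrix
   products, the T-Kronecker product with I_{ssn3} into the Kronecker product
   with an identity matrix, transposition into conjugate transposition of the
   slices, and Normalization into division of every slice by its Frobenius
   norm, a real number.  The DFT is invertible and the inverse DFT of a
   conjugate-symmetric family of slices is real, so a real tensor is determined
   by its Fourier slices and each identity can be checked slice by slice, one
   block column at a time.  There a column of the bidiagonal factor has at most
   two nonzero entries, and the resulting two-term identities are exactly the
   recurrences of the algorithm. *)

From mathcomp Require Import all_boot all_order all_algebra.
From mathcomp Require Import reals trigo boolp.
From mathcomp.real_closed Require Import complex mxtens.
From mathcomp Require Import ring lra zify.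

Set Implicit Arguments.
Unset Strict Implicit.
Unset Printing Implicit Defensive.

Import Order.TTheory GRing.Theory Num.Theory.
Local Open Scope complex_scope.
Local Open Scope ring_scope.

Lemma sum_nat_delta (T : pzSemiRingType) m (G : nat -> T) x :
  \sum_(i < m) G i * (i == x :> nat)%:R = (x < m)%N%:R * G x.
Proof.
have [x_lt | x_ge] := ltnP x m.
  rewrite (bigD1 (Ordinal x_lt)) //= eqxx mulr1 mul1r big1 ?addr0 // => i.
  by rewrite -(inj_eq val_inj) => /negbTE /= ->; rewrite mulr0.
rewrite mul0r big1 // => i _; rewrite (_ : (i == x :> nat) = false) ?mulr0 //.
by apply/negbTE; rewrite neq_ltn (leq_trans (ltn_ord i) x_ge).
Qed.

Lemma sum_shift_delta (T : pzSemiRingType) m (G : nat -> T) x :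
  G 0%N = 0 -> (x <= m)%N -> \sum_(i < m) G i.+1 * (i.+1 == x :> nat)%:R = G x.
Proof.
move=> G0 x_le; have := sum_nat_delta m.+1 G x.
by rewrite big_ord_recl /= G0 mul0r add0r ltnS x_le mul1r.
Qed.

Section RootOfUnity.
Variables (R : realType) (n : nat).
Local Notation N := n.+1.
Local Notation w := (omega R N).

Lemma omega_exprE m :
  w ^+ m = Complex (cos (m%:R * (2 * pi / N%:R))) (- sin (m%:R * (2 * pi / N%:R))).
Proof.
set th := 2 * pi / N%:R.
elim: m => [|m IHm]; first by rewrite expr0 mul0r cos0 sin0 oppr0.
have -> : m.+1%:R * th = m%:R * th + th by rewrite -natr1 mulrDl mul1r.
rewrite exprSr IHm /omega -/th cosD sinD.
by rewrite -[(_ +i* _)%C * (_ +i* _)%C]/(_ +i* _)%C; congr Complex; ring.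
Qed.

Lemma cos_lt1 (x : R) : 0 < x < pi *+ 2 -> cos x < 1.
Proof.
have pi_ge0 := ltW (pi_gt0 R).
wlog x_lepi : x / x <= pi => [Hwlog /andP[x_gt0 x_lt2pi]|/andP[x_gt0 _]].
  have [|pi_ltx] := lerP x pi; first by move=> x_lepi; apply: Hwlog; rewrite ?x_gt0.
  rewrite -cosN -(cosD2pi (- x)) addrC; apply: Hwlog; first lra.
  by apply/andP; split; lra.
by rewrite -cos0 ltr_cos ?in_itv /= ?lexx ?pi_ge0 ?(ltW x_gt0).
Qed.

Lemma omega_prim : N.-primitive_root w.
Proof.
apply/andP; split=> //; apply/forallP => i; rewrite unity_rootE omega_exprE.
have [-> | i_neqN] := eqVneq i.+1 N.
  rewrite mulrCA mulfV ?pnatr_eq0 // mulr1 mulrC mulr_natr.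
  by rewrite cos2pi sin2pi oppr0 eqxx.
rewrite eqbF_neg; apply/eqP => -[] /eqP cos_eq1 _; move: cos_eq1; apply/negP.
rewrite lt_eqF // cos_lt1 //.
have pi_gt0 := pi_gt0 R; have N_gt0 : (0 : R) < N%:R by rewrite ltr0n.
have iN : (i.+1%:R : R) < N%:R by rewrite ltr_nat ltn_neqAle i_neqN ltn_ord.
have -> : i.+1%:R * (2 * pi / N%:R) = pi *+ 2 * (i.+1%:R / N%:R) :> R.
  by rewrite mulr2n; ring.
have two_pi_gt0 : 0 < (pi : R) *+ 2 by rewrite mulrn_wgt0.
by rewrite pmulr_rgt0 ?divr_gt0 ?ltr0n //= gtr_pMr // ltr_pdivrMr // mul1r.
Qed.

Lemma omegaX_neq0 m : w ^+ m != 0.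
Proof. by rewrite expf_neq0 // (prim_root_eq0 omega_prim). Qed.

Lemma omega_mulJ : w * w^* = 1.
Proof.
rewrite /omega -[_^*]/(Complex _ _) opprK -[(_ +i* _)%C * (_ +i* _)%C]/(_ +i* _)%C.
by congr Complex; [rewrite mulNr opprK -!expr2 cos2Dsin2 | ring].
Qed.

Lemma conj_omegaX m : (w ^+ m)^* = (w ^+ m)^-1.
Proof.
rewrite rmorphXn -exprVn; congr (_ ^+ _).
by apply: (mulfI (omegaX_neq0 1)); rewrite omega_mulJ mulfV ?(omegaX_neq0 1).
Qed.

Lemma sum_omegaX_orth (a b : 'I_N) :
  \sum_(k < N) w ^+ (k * a) / w ^+ (k * b) = (a == b)%:R * N%:R.
Proof.
have [-> | a_neqb] := eqVneq a b.
  under eq_bigr do rewrite divff ?omegaX_neq0 //.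
  by rewrite sumr_const card_ord mul1r.
set z := w ^+ a / w ^+ b; rewrite mul0r.
have zE k : w ^+ (k * a) / w ^+ (k * b) = z ^+ k.
  by rewrite exprMn exprVn -!exprM !(mulnC k).
under eq_bigr do rewrite zE.
have zN : z ^+ N = 1.
  rewrite exprMn exprVn -!exprM !(mulnC _ N) !exprM.
  by rewrite (prim_expr_order omega_prim) !expr1n divr1.
have z_neq1 : z - 1 != 0.
  rewrite subr_eq0 -(inj_eq (mulIf (omegaX_neq0 b))) divfK ?omegaX_neq0 // mul1r.
  by rewrite (eq_prim_root_expr omega_prim) !modn_small.
move: (subrX1 z N); rewrite zN subrr => /esym/eqP.
by rewrite mulf_eq0 (negbTE z_neq1) => /eqP.
Qed.

Lemma tidx_val (k : 'I_N) : tidx k = ((N - k) %% N)%N :> nat.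
Proof.
rewrite /tidx /insubd; case: insubP => [u /= N_k_lt -> | /=].
  by rewrite modn_small.
rewrite -leqNgt => N_le; have -> : k = 0%N :> nat by move: (ltn_ord k) N_le; lia.
by rewrite subn0 modnn.
Qed.

Lemma tidxK : involutive (@tidx N).
Proof.
move=> k; apply: val_inj => /=; rewrite !tidx_val.
have [k0 | k_gt0] := posnP k; first by rewrite k0 subn0 modnn subn0 modnn.
have k_ltN := ltn_ord k.
by rewrite (modn_small (_ : N - k < N)%N) ?subKn ?modn_small ?(ltnW k_ltN) //; lia.
Qed.

Lemma omegaX_tidx (a : 'I_N) b : w ^+ (tidx a * b) = (w ^+ (a * b))^-1.
Proof.
rewrite !exprM -exprVn; congr (_ ^+ _); rewrite tidx_val (prim_expr_mod omega_prim).
apply: (mulIf (omegaX_neq0 a)); rewrite mulVf ?omegaX_neq0 // -exprD subnK.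
  exact: prim_expr_order omega_prim.
exact/ltnW/ltn_ord.
Qed.

End RootOfUnity.

Section DFT.
Variables (R : realType) (n : nat).
Local Notation N := n.+1.
Local Notation C := R[i].
Local Notation w := (omega R N).

(* [conjc_real] restated with [Num.conj], the conjugation produced by [rmorphM]. *)
Lemma conj_real_complex (x : R) : (x%:C)^* = x%:C.
Proof. exact: conjc_real. Qed.

Definition dft (g : 'I_N -> C) (k : 'I_N) : C := \sum_(l < N) w ^+ (k * l) * g l.

Definition idft (F : 'I_N -> C) (l : 'I_N) : C :=
  N%:R^-1 * \sum_(k < N) (w ^+ (k * l))^-1 * F k.

Lemma dft0 k : dft (fun _ => 0) k = 0.
Proof. by rewrite /dft big1 // => l _; rewrite mulr0. Qed.

Lemma dft_etube k : dft (fun l => (@etube R N ord0 ord0 l)%:C) k = 1.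
Proof.
rewrite /dft /etube (bigD1 ord0) //= big1 => [|l].
  by rewrite muln0 expr0 mulr1 addr0.
by rewrite -(inj_eq val_inj) => /negbTE /= ->; rewrite mulr0.
Qed.

Definition conj_sym (F : 'I_N -> C) := forall k, F (tidx k) = (F k)^*.

Lemma sift_delta (G : 'I_N -> C) (b : 'I_N) :
  N%:R^-1 * \sum_(a < N) G a * ((a == b)%:R * N%:R) = G b.
Proof.
rewrite (bigD1 b) //= eqxx big1 => [|a /negbTE ->]; last by rewrite mul0r mulr0.
by rewrite addr0 mul1r mulrCA mulVf ?mulr1 ?pnatr_eq0.
Qed.

Lemma dftK : cancel dft idft.
Proof.
move=> g; apply: funext => l; rewrite -[RHS](sift_delta g l) /idft; congr (_ * _).
under [RHS]eq_bigr do rewrite -sum_omegaX_orth mulr_sumr.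
rewrite /dft; under [LHS]eq_bigr do rewrite mulr_sumr.
rewrite exchange_big; apply: eq_bigr => l' _; apply: eq_bigr => k _.
by rewrite mulrCA mulrA mulrC.
Qed.

Lemma idftK : cancel idft dft.
Proof.
move=> F; apply: funext => k; rewrite -[RHS](sift_delta F k) /dft /idft.
under [in RHS]eq_bigr do rewrite eq_sym -sum_omegaX_orth mulr_sumr.
under [LHS]eq_bigr do rewrite mulrCA mulr_sumr.
rewrite -mulr_sumr exchange_big; congr (_ * _); apply: eq_bigr => k' _.
apply: eq_bigr => l _.
by rewrite !(mulnC l); ring.
Qed.

Lemma conj_sym_dft_real (f : 'I_N -> R) : conj_sym (dft (fun l => (f l)%:C)).
Proof.
move=> k; rewrite /dft rmorph_sum; apply: eq_bigr => l _.
by rewrite rmorphM /= conj_omegaX omegaX_tidx conj_real_complex.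
Qed.

Lemma real_idft F l : conj_sym F -> (complex.Re (idft F l))%:C = idft F l.
Proof.
move=> symF; apply/RRe_real/CrealP.
rewrite /idft rmorphM rmorph_sum /= fmorphV /= conjC_nat; congr (_ * _).
rewrite (reindex_inj (can_inj (@tidxK n))) /=; apply: eq_bigr => k _.
by rewrite rmorphM /= -symF tidxK fmorphV /= conj_omegaX invrK omegaX_tidx.
Qed.

End DFT.

Section TubalFourier.
Variables (R : realType) (n : nat).
Local Notation N := n.+1.
Local Notation C := R[i].

Definition conj_symmx m p (F : 'I_N -> 'M[C]_(m, p)) :=
  forall i j, conj_sym (fun k => F k i j).

Lemma tfftE m p (X : tensor R m p N) k i j :
  tfft X k i j = dft (fun l => (X i j l)%:C) k.
Proof. by rewrite mxE. Qed.

Lemma tifftE m p (F : 'I_N -> 'M[C]_(m, p)) i j l :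
  tifft F i j l = complex.Re (idft (fun k => F k i j) l).
Proof. by []. Qed.

Lemma tifft_tfft m p (X : tensor R m p N) : tifft (tfft X) = X.
Proof.
apply: funext => i; apply: funext => j; apply: funext => l.
rewrite tifftE; under eq_fun do rewrite tfftE.
by rewrite dftK.
Qed.

Lemma tfft_inj m p : injective (@tfft R m p N).
Proof. exact: can_inj (@tifft_tfft m p). Qed.

Lemma tfft_tifft m p (F : 'I_N -> 'M[C]_(m, p)) :
  conj_symmx F -> tfft (tifft F) = F.
Proof.
move=> symF; apply: funext => k; apply/matrixP => i j; rewrite tfftE.
under eq_fun do rewrite tifftE real_idft //.
by rewrite idftK.
Qed.

Lemma conj_symmx_tfft m p (X : tensor R m p N) : conj_symmx (tfft X).
Proof. by move=> i j k; rewrite !tfftE conj_sym_dft_real. Qed.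

Lemma conj_symmx_mul m p q (F : 'I_N -> 'M[C]_(m, p)) (G : 'I_N -> 'M[C]_(p, q)) :
  conj_symmx F -> conj_symmx G -> conj_symmx (fun k => F k *m G k).
Proof.
move=> symF symG i j k; rewrite !mxE rmorph_sum; apply: eq_bigr => l _.
by rewrite symF symG rmorphM.
Qed.

Lemma conj_symmx_tensmx m1 m2 p1 p2
    (F : 'I_N -> 'M[C]_(m1, m2)) (G : 'I_N -> 'M[C]_(p1, p2)) :
  conj_symmx F -> conj_symmx G -> conj_symmx (fun k => tensmx (F k) (G k)).
Proof. by move=> symF symG i j k; rewrite !mxE symF symG rmorphM. Qed.

Lemma conj_symmx_scale m p (f : 'I_N -> C) (F : 'I_N -> 'M[C]_(m, p)) :
  conj_sym f -> conj_symmx F -> conj_symmx (fun k => f k *: F k).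
Proof. by move=> symf symF i j k; rewrite !mxE symf symF rmorphM. Qed.

Lemma conj_symmx_scalar m (f : 'I_N -> C) :
  conj_sym f -> conj_symmx (fun k => (f k)%:M : 'M_m).
Proof. by move=> symf i j k; rewrite !mxE symf rmorphMn. Qed.

Lemma conj_sym_inv (f : 'I_N -> C) : conj_sym f -> conj_sym (fun k => (f k)^-1).
Proof. by move=> symf k; rewrite symf fmorphV. Qed.

Lemma tfft_tprod m p q (X : tensor R m p N) (Y : tensor R p q N) k :
  tfft (tprod X Y) k = tfft X k *m tfft Y k.
Proof.
by rewrite /tprod tfft_tifft //; apply: conj_symmx_mul; apply: conj_symmx_tfft.
Qed.

Lemma tfft_tkron m1 m2 p1 p2 (X : tensor R m1 m2 N) (Y : tensor R p1 p2 N) k :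
  tfft (tkron X Y) k = tensmx (tfft X k) (tfft Y k).
Proof.
by rewrite /tkron tfft_tifft //; apply: conj_symmx_tensmx; apply: conj_symmx_tfft.
Qed.

Lemma tfft_tadd m p (X Y : tensor R m p N) k i j :
  tfft (tadd X Y) k i j = tfft X k i j + tfft Y k i j.
Proof.
by rewrite !tfftE /dft -big_split; apply: eq_bigr => l _; rewrite rmorphD mulrDr.
Qed.

Lemma tfft_tsub m p (X Y : tensor R m p N) k i j :
  tfft (tsub X Y) k i j = tfft X k i j - tfft Y k i j.
Proof.
by rewrite !tfftE /dft -sumrB; apply: eq_bigr => l _; rewrite rmorphB mulrBr.
Qed.

Lemma tfft_ttr m p (X : tensor R m p N) k i j : tfft (ttr X) k i j = (tfft X k j i)^*.
Proof.
rewrite !tfftE /dft rmorph_sum (reindex_inj (can_inj (@tidxK n))) /=.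
apply: eq_bigr => l _; rewrite /ttr tidxK rmorphM /= conj_real_complex.
by rewrite conj_omegaX mulnC omegaX_tidx mulnC.
Qed.

Lemma tfft_tid s k : tfft (@tid R s N) k = 1%:M.
Proof.
apply/matrixP => i j; rewrite tfftE [RHS]mxE /dft /tid (bigD1 ord0) //= big1.
  by rewrite muln0 expr0 mul1r addr0 andbT; case: (i == j).
by move=> l; rewrite -(inj_eq val_inj) => /negbTE /= ->; rewrite andbF mulr0.
Qed.

Lemma tfft_tdivt m p (t : tube R N) (W : tensor R m p N) k i j :
  tfft (tdivt t W) k i j = tfft t k ord0 ord0 * tfft W k i j.
Proof.
transitivity (tfft (tprod t (fun _ _ : 'I_1 => W i j)) k ord0 ord0); first by rewrite !tfftE.
by rewrite tfft_tprod mxE big_ord1 !tfftE.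
Qed.

Lemma tfft_castr m m' p (e : m = m') (X : tensor R m p N) k i j :
  tfft (castr e X) k i j = tfft X k (cast_ord (esym e) i) j.
Proof. by rewrite !tfftE. Qed.

Lemma tfft_castc m p p' (e : p = p') (X : tensor R m p N) k i j :
  tfft (castc e X) k i j = tfft X k i (cast_ord (esym e) j).
Proof. by rewrite !tfftE. Qed.

Lemma frob_ge0 m p (M : 'M[C]_(m, p)) : 0 <= frob M.
Proof.
by rewrite sqrtC_ge0 sumr_ge0 // => i _; rewrite sumr_ge0 // => j _; rewrite exprn_ge0.
Qed.

Lemma conj_sym_frob_tfft m p (W : tensor R m p N) : conj_sym (fun k => frob (tfft W k)).
Proof.
move=> k; rewrite geC0_conj ?frob_ge0 //; congr sqrtC.
by apply: eq_bigr => i _; apply: eq_bigr => j _; rewrite conj_symmx_tfft norm_conjC.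
Qed.

Lemma tfft_normalization1 m p (W : tensor R m p N) k :
  tfft (normalization W).1 k = (frob (tfft W k))^-1 *: tfft W k.
Proof.
rewrite tfft_tifft //; apply: conj_symmx_scale; last exact: conj_symmx_tfft.
exact/conj_sym_inv/conj_sym_frob_tfft.
Qed.

Lemma tfft_normalization2 m p (W : tensor R m p N) k :
  tfft (normalization W).2 k = (frob (tfft W k))%:M.
Proof. by rewrite tfft_tifft //; apply/conj_symmx_scalar/conj_sym_frob_tfft. Qed.

Lemma normalization_scale m p (W Q : tensor R m p N) (t : tube R N) k i j :
  nobreak W -> (Q, t) = normalization W -> tfft W k i j = tfft t k ord0 ord0 * tfft Q k i j.
Proof.
move=> nbW [-> ->]; rewrite tfft_normalization1 tfft_normalization2 !mxE mulr1n.
by rewrite mulrA mulfV ?mul1r.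
Qed.

Lemma normalization_real m p (W Q : tensor R m p N) (t : tube R N) k :
  (Q, t) = normalization W -> (tfft t k ord0 ord0)^* = tfft t k ord0 ord0.
Proof. by move=> [_ ->]; rewrite tfft_normalization2 mxE mulr1n geC0_conj ?frob_ge0. Qed.

Lemma sum_mxtens_index p q (F : 'I_(p * q) -> C) :
  \sum_(x < p * q) F x = \sum_(i < p) \sum_(d < q) F (mxtens_index (i, d)).
Proof.
rewrite pair_big; apply: (reindex (fun x => mxtens_index (x.1, x.2))).
exists (@mxtens_unindex p q) => x _; first by rewrite -surjective_pairing mxtens_indexK.
by rewrite -surjective_pairing mxtens_unindexK.
Qed.

Lemma eq_tensor_mxtens m q s (X Y : tensor R m (q * s) N) :
  (forall k r j c, tfft X k r (mxtens_index (j, c)) = tfft Y k r (mxtens_index (j, c))) ->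
  X = Y.
Proof.
move=> XY; apply: tfft_inj; apply: funext => k; apply/matrixP => r x.
by case: (mxtens_indexP x) => j c; apply: XY.
Qed.

Lemma tfft_tkron_tid m q s (X : tensor R m q N) k i d j c :
  tfft (tkron X (@tid R s N)) k (mxtens_index (i, d)) (mxtens_index (j, c)) =
  tfft X k i j * (d == c)%:R.
Proof. by rewrite tfft_tkron tfft_tid tensmxE [1%:M d c]mxE. Qed.

Lemma tfft_tprod_bcat m p q s (Y : tensor R m p N) (G : 'I_q -> tensor R p s N) k r j c :
  tfft (tprod Y (bcat G)) k r (mxtens_index (j, c)) = (tfft Y k *m tfft (G j) k) r c.
Proof.
rewrite tfft_tprod !mxE; apply: eq_bigr => x _.
by rewrite !tfftE /bcat mxtens_indexK.
Qed.

Lemma tfft_tprod_bcat_tkron m p q s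
    (F : 'I_p -> tensor R m s N) (X : tensor R p q N) k r j c :
  tfft (tprod (bcat F) (tkron X (@tid R s N))) k r (mxtens_index (j, c)) =
  \sum_(i < p) tfft (F i) k r c * tfft X k i j.
Proof.
rewrite tfft_tprod mxE sum_mxtens_index; apply: eq_bigr => i _.
rewrite (bigD1 c) //= big1 => [|d /negbTE d_neqc]; last first.
  by rewrite tfft_tkron_tid d_neqc !mulr0.
by rewrite tfft_tkron_tid eqxx mulr1 addr0 !tfftE /bcat mxtens_indexK.
Qed.

Lemma cast_mul1n_mxtens_index s (c : 'I_s) :
  cast_ord (esym (mul1n s)) c = mxtens_index (ord0, c).
Proof. by apply: val_inj. Qed.

Lemma tfft_tprod_castr_tkron m q s (Y : tensor R m s N) (T : tensor R 1 q N) k r j c :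
  tfft (tprod Y (castr (mul1n s) (tkron T (@tid R s N)))) k r (mxtens_index (j, c)) =
  tfft Y k r c * tfft T k ord0 j.
Proof.
rewrite tfft_tprod mxE (bigD1 c) //= big1 => [|d /negbTE d_neqc].
  by rewrite tfft_castr cast_mul1n_mxtens_index tfft_tkron_tid eqxx mulr1 addr0.
by rewrite tfft_castr cast_mul1n_mxtens_index tfft_tkron_tid d_neqc !mulr0.
Qed.

End TubalFourier.

Section Bidiagonal.
Variables (R : realType) (n k : nat) (a b : nat -> tube R n.+1) (z : 'I_n.+1).
Local Notation N := n.+1.

Lemma tfft_Ctil (i : 'I_k.+1) (j : 'I_k) :
  tfft (@Ctil R N k a b) z i j =
  tfft (b j.+1) z ord0 ord0 * (i == j :> nat)%:R +
  tfft (a j.+2) z ord0 ord0 * (i == j.+1 :> nat)%:R.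
Proof.
rewrite !tfftE /Ctil; have [-> | i_neqj] := eqVneq (i : nat) j.
  by rewrite ltn_eqF // mulr1 mulr0 addr0.
rewrite mulr0 add0r; have [_ | _] := eqVneq (i : nat) j.+1; first by rewrite mulr1.
by rewrite mulr0 dft0.
Qed.

Lemma tfft_Cmat (i j : 'I_k) :
  tfft (@Cmat R N k a b) z i j = tfft (@Ctil R N k a b) z (widen_ord (leqnSn k) i) j.
Proof. by rewrite !tfftE. Qed.

Lemma tfft_Ek j : tfft (@Ek R k N) z ord0 j = (j == k.-1 :> nat)%:R.
Proof. by rewrite tfftE /Ek; case: eqP => _; rewrite ?dft_etube ?dft0. Qed.

Lemma tfft_E1 i : tfft (@E1 R k N) z i ord0 = (i == 0%N :> nat)%:R.
Proof. by rewrite tfftE /E1; case: eqP => _; rewrite ?dft_etube ?dft0. Qed.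

Lemma Ctil_split_slice m s (U : nat -> tensor R m s N) r (j : 'I_k) c :
  tfft (tprod (bcat (fun i : 'I_k.+1 => U i.+1)) (tkron (@Ctil R N k a b) (@tid R s N)))
    z r (mxtens_index (j, c)) =
  tfft (tadd (tprod (bcat (fun i : 'I_k => U i.+1)) (tkron (@Cmat R N k a b) (@tid R s N)))
             (tprod (U k.+1)
                (castr (mul1n s) (tkron (tprod (a k.+1) (@Ek R k N)) (@tid R s N)))))
    z r (mxtens_index (j, c)).
Proof.
(* [Cmat] is [Ctil] without its last row, whose only nonzero entry is [a_(k+1)] in
   column [k-1]. *)
rewrite tfft_tadd !tfft_tprod_bcat_tkron tfft_tprod_castr_tkron big_ord_recr /=.
congr (_ + _); first by apply: eq_bigr => i _; rewrite tfft_Cmat.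
congr (_ * _); rewrite tfft_tprod [RHS]mxE big_ord1 tfft_Ek tfft_Ctil /=.
rewrite gtn_eqF // mulr0 add0r.
have j_lt_k := ltn_ord j.
have -> : (j == k.-1 :> nat) = (k == j.+1) by apply/eqP/eqP; lia.
by case: eqP => [<- | _]; rewrite ?mulr1 ?mulr0.
Qed.

End Bidiagonal.

Section GolubKahanSlices.
Variables (R : realType) (n n1 n2 s k : nat).
Local Notation N := n.+1.
Variables (A : tensor R n1 n2 N) (B : tensor R n1 s N).
Variables (U : nat -> tensor R n1 s N) (V : nat -> tensor R n2 s N) (a b : nat -> tube R N).
Hypothesis gk : GK_run A B k U V a b.
Variable z : 'I_N.

Local Notation Uh j := (tfft (U j) z).
Local Notation Vh j := (tfft (V j) z).
Local Notation al j := (tfft (a j) z ord0 ord0).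
Local Notation be j := (tfft (b j) z ord0 ord0).
Local Notation Uk := (bcat (fun j : 'I_k => U j.+1)).
Local Notation Uk1 := (bcat (fun j : 'I_k.+1 => U j.+1)).
Local Notation Vk := (bcat (fun j : 'I_k => V j.+1)).

Lemma gk_start r c : tfft B z r c = al 1 * Uh 1 r c.
Proof. by case: gk => _ nbB Ua1 _; apply: normalization_scale. Qed.

Lemma gk_V0 r c : Vh 0 r c = 0.
Proof. by case: gk => -> _ _ _; rewrite tfftE dft0. Qed.

Lemma gk_stepV j r c : (1 <= j <= k)%N ->
  be j * Vh j r c = (tfft (ttr A) z *m Uh j) r c - al j * Vh j.-1 r c.
Proof.
move=> j_range; case: gk => _ _ _ /(_ j j_range) [nb [Vb _]].
by rewrite -(normalization_scale _ _ _ nb Vb) tfft_tsub tfft_tprod tfft_tdivt.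
Qed.

Lemma gk_stepU j r c : (1 <= j <= k)%N ->
  al j.+1 * Uh j.+1 r c = (tfft A z *m Vh j) r c - be j * Uh j r c.
Proof.
move=> j_range; case: gk => _ _ _ /(_ j j_range) [_ [_ [nb Ua]]].
by rewrite -(normalization_scale _ _ _ nb Ua) tfft_tsub tfft_tprod tfft_tdivt.
Qed.

Lemma gk_real j : (1 <= j <= k)%N -> (be j)^* = be j /\ (al j.+1)^* = al j.+1.
Proof.
move=> j_range; case: gk => _ _ _ /(_ j j_range) [_ [Vb [_ Ua]]].
by split; [exact: normalization_real Vb | exact: normalization_real Ua].
Qed.

Lemma gk_AV_slice r (j : 'I_k) c :
  tfft (tprod A Vk) z r (mxtens_index (j, c)) =
  tfft (tprod Uk1 (tkron (@Ctil R N k a b) (@tid R s N))) z r (mxtens_index (j, c)).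
Proof.
rewrite tfft_tprod_bcat tfft_tprod_bcat_tkron.
under eq_bigr do rewrite tfft_Ctil mulrDr !mulrA.
rewrite big_split /= !(sum_nat_delta _ (fun i => Uh i.+1 r c * _)) !ltnS ltn_ord ltnW //.
have stepU := @gk_stepU j.+1 r c (ltn_ord j).
by rewrite /= !mulr1n !mul1r [Uh j.+2 r c * _]mulrC stepU mulrC addrC subrK.
Qed.

Lemma gk_ATU_slice r (j : 'I_k) c :
  tfft (tprod (ttr A) Uk) z r (mxtens_index (j, c)) =
  tfft (tprod Vk (tkron (ttr (@Cmat R N k a b)) (@tid R s N))) z r (mxtens_index (j, c)).
Proof.
rewrite tfft_tprod_bcat tfft_tprod_bcat_tkron.
rewrite (eq_bigr (fun i : 'I_k => Vh i.+1 r c * be i.+1 * (i == j :> nat)%:R +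
                                  Vh i.+1 r c * al i.+2 * (i.+1 == j :> nat)%:R)); last first.
  move=> i _; have [be_real al_real] := @gk_real i.+1 (ltn_ord i).
  rewrite tfft_ttr tfft_Cmat tfft_Ctil rmorphD !rmorphM /= !conjC_nat be_real al_real.
  by rewrite !(eq_sym (j : nat)) mulrDr !mulrA.
rewrite big_split /= (sum_nat_delta _ (fun i => Vh i.+1 r c * be i.+1)) ltn_ord mul1r.
(* For [j = 0] the subdiagonal term vanishes because [V_0 = 0]. *)
rewrite (@sum_shift_delta _ k (fun i => Vh i r c * al i.+1) j);
  [|by rewrite gk_V0 mul0r | exact/ltnW].
have stepV := @gk_stepV j.+1 r c (ltn_ord j).
by rewrite mulrC stepV [Vh j r c * _]mulrC subrK.
Qed.

Lemma gk_B_slice r c :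
  tfft B z r c =
  tfft (castc (mul1n s) (tprod Uk1 (tkron (tprod (@E1 R k N) (a 1%N)) (@tid R s N)))) z r c.
Proof.
rewrite tfft_castc cast_mul1n_mxtens_index tfft_tprod_bcat_tkron.
rewrite (eq_bigr (fun i : 'I_k.+1 => Uh i.+1 r c * al 1 * (i == 0%N :> nat)%:R)); last first.
  by move=> i _; rewrite tfft_tprod [(_ *m _) _ _]mxE big_ord1 tfft_E1 mulrA mulrAC.
by rewrite (sum_nat_delta _ (fun i => Uh i.+1 r c * al 1)) mul1r gk_start mulrC.
Qed.

End GolubKahanSlices.

Lemma tensor_eq0 (R : realType) m p (X Y : tensor R m p 0) : X = Y.
Proof. by apply: funext => i; apply: funext => j; apply: funext => -[]. Qed.

Theorem proposition13 (R : realType) (n1 n2 n3 s k : nat)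
  (A : tensor R n1 n2 n3) (B : tensor R n1 s n3)
  (U : nat -> tensor R n1 s n3) (V : nat -> tensor R n2 s n3)
  (a b : nat -> tube R n3) :
  GK_run A B k U V a b ->
  let Uk := bcat (fun j : 'I_k => U j.+1) in
  let Uk1 := bcat (fun j : 'I_k.+1 => U j.+1) in
  let Vk := bcat (fun j : 'I_k => V j.+1) in
  [/\ tprod A Vk = tprod Uk1 (tkron (@Ctil R n3 k a b) (@tid R s n3)),
      tprod Uk1 (tkron (@Ctil R n3 k a b) (@tid R s n3))
        = tadd (tprod Uk (tkron (@Cmat R n3 k a b) (@tid R s n3)))
               (tprod (U k.+1)
                  (castr (mul1n s) (tkron (tprod (a k.+1) (@Ek R k n3)) (@tid R s n3)))),
      tprod (ttr A) Uk = tprod Vk (tkron (ttr (@Cmat R n3 k a b)) (@tid R s n3)) &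
      B = castc (mul1n s) (tprod Uk1 (tkron (tprod (@E1 R k n3) (a 1%N)) (@tid R s n3)))].
Proof.
case: n3 A B U V a b => [|n] A B U V a b gk Uk Uk1 Vk; first by split; apply: tensor_eq0.
split.
- by apply: eq_tensor_mxtens => z r j c; apply: gk_AV_slice gk z r j c.
- by apply: eq_tensor_mxtens => z r j c; apply: Ctil_split_slice.
- by apply: eq_tensor_mxtens => z r j c; apply: gk_ATU_slice gk z r j c.
- apply: tfft_inj; apply: funext => z; apply/matrixP => r c.
  exact: gk_B_slice gk z r c.
Qed.
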